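(* Let $f$ be a non-negative monotone submodular function on the ground set $[m]=\{1,\dots,m\}$ (identified with a function on $\{0,1\}^m$ via indicator vectors), and let $F$ be its multilinear extension. Let $\mathbf{x}\in[0,1]^m$ satisfy $\sum_{i=1}^m x_i\le 1$, and let $\mathbf{e}_i\in\{0,1\}^m$ denote the $i$-th standard unit vector. Then $F(\mathbf{x})\le\sum_{i=1}^m x_i f(\mathbf{e}_i)+\left(1-\sum_{i=1}^m x_i\right)f(\mathbf{0})$.
   Context: The multilinear extension of $f$ is $F(\mathbf{x})=\sum_{T\subseteq[m]}\prod_{k\in T}x_k\prod_{k\notin T}(1-x_k)f(T)$ for $\mathbf{x}\in[0,1]^m$. $f$ submodular means $f(A\cup B)+f(A\cap B)\le f(A)+f(B)$ for all $A,B\subseteq[m]$; monotone means $f(A)\le f(B)$ for $A\subseteq B$. *)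

(* Ground set [m] = 'I_m; subsets of [m] = {set 'I_m}
   (identified with indicator vectors in {0,1}^m). *)
From mathcomp Require Import all_boot all_order all_algebra.
Set Implicit Arguments. Unset Strict Implicit. Unset Printing Implicit Defensive.
Import Order.TTheory GRing.Theory Num.Theory.
Local Open Scope ring_scope.

Definition submodular (R : realFieldType) (m : nat) (f : {set 'I_m} -> R) :=
  forall A B : {set 'I_m}, f (A :|: B) + f (A :&: B) <= f A + f B.

Definition monotone (R : realFieldType) (m : nat) (f : {set 'I_m} -> R) :=
  forall A B : {set 'I_m}, A \subset B -> f A <= f B.

Definition nonnegative (R : realFieldType) (m : nat) (f : {set 'I_m} -> R) :=
  forall A : {set 'I_m}, 0 <= f A.

Definition multilinear_ext (R : realFieldType) (m : nat) (f : {set 'I_m} -> R)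
  (x : 'I_m -> R) : R :=
  \sum_(T : {set 'I_m})
     (\prod_(k in T) x k) * (\prod_(k in ~: T) (1 - x k)) * f T.

(* Under independent rounding, where each k enters the random set with
   probability x k, the multilinear extension is the expectation of f.
   Submodularity bounds f pointwise by the modular function
   T |-> f set0 + \sum_(k in T) (f [set k] - f set0), whose expectation is
   f set0 + \sum_k x k * (f [set k] - f set0): the marginal probability that k
   is picked is x k. *)
From mathcomp Require Import all_boot all_order all_algebra.
From mathcomp Require Import lra.
Set Implicit Arguments. Unset Strict Implicit. Unset Printing Implicit Defensive.
Import Order.TTheory GRing.Theory Num.Theory.
Local Open Scope ring_scope.

Section IndependentRounding.
Variables (R : comNzRingType) (I : finType).

Lemma prodD_set (F G : I -> R) :
  \prod_i (F i + G i) =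
  \sum_(J : {set I}) (\prod_(i in J) F i) * (\prod_(i in ~: J) G i).
Proof.
rewrite bigA_distr; apply: eq_bigr => J _; rewrite big_if.
by congr (_ * _); apply: eq_bigl => i; rewrite ?in_setC.
Qed.

Definition indep_prob (x : I -> R) (T : {set I}) : R :=
  (\prod_(i in T) x i) * (\prod_(i in ~: T) (1 - x i)).

Lemma sum_indep_prob (x : I -> R) : \sum_(T : {set I}) indep_prob x T = 1.
Proof.
rewrite -prodD_set; under eq_bigr => i _ do rewrite addrC subrK.
by rewrite big1.
Qed.

Lemma sum_indep_prob_mem (x : I -> R) (k : I) :
  \sum_(T : {set I} | k \in T) indep_prob x T = x k.
Proof.
(* Replacing the factor 1 - x k by 0 kills exactly the sets avoiding k. *)
pose G i := if i == k then 0 else 1 - x i.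
have -> : x k = \prod_i (x i + G i).
  rewrite (bigD1 k) //= /G eqxx addr0 big1 ?mulr1 // => i /negbTE ->.
  by rewrite addrC subrK.
rewrite prodD_set big_mkcond; apply: eq_bigr => T _.
have [kT | kNT] := boolP (k \in T).
  congr (_ * _); apply: eq_bigr => i; rewrite in_setC /G.
  by case: eqP => // -> /negP.
rewrite (bigD1 k (P := mem (~: T))) /=; last by rewrite in_setC.
by rewrite /G /= eqxx mul0r mulr0.
Qed.

End IndependentRounding.

Lemma indep_prob_ge0 (R : numDomainType) (I : finType) (x : I -> R)
    (T : {set I}) :
  (forall i, 0 <= x i <= 1) -> 0 <= indep_prob x T.
Proof.
move=> x01; apply: mulr_ge0; apply: prodr_ge0 => i _.
  by case/andP: (x01 i).
by case/andP: (x01 i) => _; rewrite subr_ge0.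
Qed.

Section MultilinearExtension.
Variables (R : realFieldType) (m : nat).
Implicit Types (f g : {set 'I_m} -> R) (x : 'I_m -> R).

Lemma multilinear_extE f x :
  multilinear_ext f x = \sum_(T : {set 'I_m}) indep_prob x T * f T.
Proof. by []. Qed.

Lemma le_multilinear_ext f g x :
  (forall i, 0 <= x i <= 1) -> (forall T, f T <= g T) ->
  multilinear_ext f x <= multilinear_ext g x.
Proof.
move=> x01 le_fg; apply: ler_sum => T _.
by apply: ler_wpM2l; [exact: indep_prob_ge0 | exact: le_fg].
Qed.

Lemma multilinear_ext_modular (c : R) (a : 'I_m -> R) x :
  multilinear_ext (fun T => c + \sum_(k in T) a k) x = c + \sum_k a k * x k.
Proof.
rewrite multilinear_extE.
under eq_bigr => T _ do rewrite mulrDr (big_mkcond (mem T)) mulr_sumr.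
rewrite big_split /= -mulr_suml sum_indep_prob mul1r exchange_big /=.
congr (_ + _); apply: eq_bigr => k _.
rewrite -(sum_indep_prob_mem x k) mulr_sumr [RHS]big_mkcond.
apply: eq_bigr => T _.
by case: (k \in T); rewrite ?mulr0 // mulrC.
Qed.

Lemma submodular_setU1 f (k : 'I_m) (A : {set 'I_m}) :
  submodular f -> k \notin A -> f (k |: A) + f set0 <= f [set k] + f A.
Proof.
move=> f_sub kNA; have := f_sub [set k] A.
suff -> : [set k] :&: A = set0 by [].
by apply/setP => i; rewrite !inE; case: eqP => // ->; rewrite (negbTE kNA).
Qed.

Lemma submodular_le_singletons f (T : {set 'I_m}) :
  submodular f -> f T <= f set0 + \sum_(k in T) (f [set k] - f set0).
Proof.
move=> f_sub; rewrite -[in f T](set_enum T) -big_enum /=.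
elim: (enum T) (enum_uniq T) => [_ | k s IHs /= /andP[kNs s_uniq]].
  by rewrite set_nil big_nil addr0.
rewrite set_cons big_cons.
have kNs' : k \notin [set:: s] by rewrite inE.
have := submodular_setU1 f_sub kNs'; have := IHs s_uniq; lra.
Qed.

End MultilinearExtension.

Theorem lemma5 (R : realFieldType) (m : nat) (f : {set 'I_m} -> R)
  (f_nonneg : nonnegative f) (f_mono : monotone f) (f_sub : submodular f)
  (x : 'I_m -> R) (x_range : forall i, 0 <= x i <= 1)
  (x_sum : \sum_(i < m) x i <= 1) :
  multilinear_ext f x <=
    \sum_(i < m) x i * f [set i] + (1 - \sum_(i < m) x i) * f set0.
Proof.
apply: le_trans (le_multilinear_ext x_range
  (fun T => submodular_le_singletons T f_sub)) _.
rewrite multilinear_ext_modular mulrBl mul1r mulr_suml addrCA -sumrB.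
rewrite le_eqVlt; apply/predU1l; congr (_ + _).
by apply: eq_bigr => k _; rewrite mulrC mulrBr.
Qed.
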